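(* Run the algorithm GBGC (described in the context) on input $(\mathbf e_1,f_1),\dots,(\mathbf e_m,f_m)$, with an arbitrary rule for choosing which critical pair to process next and arbitrary choices of reducers during reduction. Suppose the strict partial orders $<$ on $G$ used in the generalized rewritable criterion are admissible, and suppose the algorithm terminates. Then the returned set $G$ is an S-Gröbner basis for $\mathbf M=\langle(\mathbf e_1,f_1),\dots,(\mathbf e_m,f_m)\rangle$ (and hence $\{g:(\mathbf v,g)\in G\}$ is a Gröbner basis of $\langle f_1,\dots,f_m\rangle$ w.r.t. the term order on $R$).
   Context: Setting: $R=K[x_1,\dots,x_n]$ over a field $K$, $f_1,\dots,f_m\in R$, $\mathbf f=(f_1,\dots,f_m)$, $\mathbf e_i$ the $i$-th unit vector of $R^m$, $\mathbf M=\{(\mathbf u,f)\in R^m\times R:\mathbf u\cdot\mathbf f=f\}$. Fix an arbitrary term order $\prec$ on power products of $R$ and an arbitrary term order $\prec$ on terms $x^\alpha\mathbf e_i$ of $R^m$ (not necessarily related). $\mathrm{lpp}$ = leading power product (leading term for vectors), $\mathrm{lc}$ = leading coefficient; $\mathrm{lpp}(0)=0$ is below every nonzero power product/term. $\mathrm{lpp}(\mathbf u)$ is called the signature of $(\mathbf u,f)$. Critical pairs: for $(\mathbf u,f),(\mathbf v,g)\in\mathbf M$ with $f,g\ne0$, $t=\mathrm{lcm}(\mathrm{lpp}(f),\mathrm{lpp}(g))$, $t_f=t/\mathrm{lpp}(f)$, $t_g=t/\mathrm{lpp}(g)$; if $\mathrm{lpp}(t_f\mathbf u)\succeq\mathrm{lpp}(t_g\mathbf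 v)$ then $[t_f(\mathbf u,f),t_g(\mathbf v,g)]$ is a critical pair of $(\mathbf u,f)$ and $(\mathbf v,g)$, with S-polynomial $t_f(\mathbf u,f)-c\,t_g(\mathbf v,g)=(t_f\mathbf u-ct_g\mathbf v,\,t_ff-ct_gg)$, $c=\mathrm{lc}(f)/\mathrm{lc}(g)$. It is called regular if $\mathrm{lpp}(t_f\mathbf u)\succ\mathrm{lpp}(t_g\mathbf v)$. Generalized rewritable criterion: given a finite $B\subset\mathbf M$ with a strict partial order $<$ on $B$, a multiple $t(\mathbf u,f)$ with $(\mathbf u,f)\in B$, $f\ne0$, $t$ a power product, is gen-rewritable by $B$ if there is $(\mathbf u',f')\in B$ with $\mathrm{lpp}(\mathbf u')\mid\mathrm{lpp}(t\mathbf u)$ and $(\mathbf u',f')<(\mathbf u,f)$. A critical pair $[t_f(\mathbf u,f),t_g(\mathbf v,g)]$ is gen-rewritable by $B$ if $t_f(\mathbf u,f)$ or $t_g(\mathbf v,g)$ is. Reduction: $(\mathbf u,f)$ is reducible by $B$ if there is $(\mathbf v,g)\in B$, $g\ne0$, with $\mathrm{lpp}(g)\mid\mathrm{lpp}(f)$ and $\mathrm{lpp}(\mathbf u-ct\mathbf v)=\mathrm{lpp}(\mathbf u)$, where $c=\mathrm{lc}(f)/\mathrm{lc}(g)$, $t=\mathrm{lpp}(f)/\mathrm{lpp}(g)$; it then one-step reduces to $(\mathbf u-ct\mathbf v,f-ctg)$. ''Reduce by $B$'' means repeating one-step reductions until the element is no longer reducible by $B$. Algorithm GBGC. Initialize $G=\{(\mathbf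 e_i,f_i):1\le i\le m\}$ and CPairs = set of all critical pairs of elements of this $G$; then add $(f_j\mathbf e_i-f_i\mathbf e_j,0)$ to $G$ for all $1\le i<j\le m$. While CPairs is nonempty: choose any critical pair $[t_f(\mathbf u,f),t_g(\mathbf v,g)]$ in CPairs and remove it; if it is regular and not gen-rewritable by the current $G$, then reduce its S-polynomial by the current $G$ to obtain $(\mathbf w,h)$; if $h\ne0$, add to CPairs the critical pair of $(\mathbf w,h)$ and $(\mathbf w',h')$ for every $(\mathbf w',h')\in G$ with $h'\ne0$, and add $(h\mathbf e_i-f_i\mathbf w,0)$ to $G$ for $i=1,\dots,m$; in either case add $(\mathbf w,h)$ to $G$. When CPairs is empty, return $G$. Throughout, $G$ carries a strict partial order $<$ that is updated whenever elements are added, in such a way that the order on the enlarged set restricts to the previous order on the old set. Admissibility: the partial orders are admissible if, for every critical pair $[t_f(\mathbf u,f),t_g(\mathbf v,g)]$ that, when selected from CPairs, is regular and not gen-rewritable by $G$, and whose S-polynomial is reduced to $(\mathbf w,h)$, one has $(\mathbf w,h)<(\mathbf u,f)$ in the updated order on $G\cup\{(\mathbf w,h)\}$. S-Gröbner basis: a finite $G\subset\mathbf M$ such that for every $(\mathbf u,f)\in\mathbf M$ (with $f\ne 0$) there is $(\mathbf v,g)\in G$ with $\mathrm{lpp}(g)\mid\mathrm{lpp}(f)$ and $\mathrm{lpp}(t\mathbf v)\preceq\mathrm{lpp}(\mathbf u)$, where $t=\mathrm{lpp}(f)/\mathrm{lpp}(g)$. *)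

From HB Require Import structures.
From mathcomp Require Import all_boot all_order all_algebra.
From Stdlib Require Import ClassicalEpsilon Relation_Operators.
Set Implicit Arguments. Unset Strict Implicit. Unset Printing Implicit Defensive.
Import GRing.Theory.
Local Open Scope ring_scope.

Section GBGC.
Variables (K : fieldType) (n m : nat).

Definition mono := {ffun 'I_n -> nat}.
Definition mono1 : mono := [ffun => 0%N].
Definition mmul (a b : mono) : mono := [ffun k => (a k + b k)%N].
Definition mdvd (a b : mono) : bool := [forall k, (a k <= b k)%N].
Definition mquo (b a : mono) : mono := [ffun k => (b k - a k)%N].
Definition mlcm (a b : mono) : mono := [ffun k => maxn (a k) (b k)].

Definition mterm := (mono * 'I_m)%type.
Definition tmul (t : mono) (x : mterm) : mterm := (mmul t x.1, x.2).
Definition tdvd (x y : mterm) : bool := (x.2 == y.2) && mdvd x.1 y.1.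

Definition strict_total (X : eqType) (lt : rel X) : Prop :=
  [/\ irreflexive lt, transitive lt & forall x y, x != y -> lt x y || lt y x].
Definition is_term_order (lt : rel mono) : Prop :=
  [/\ strict_total lt,
      forall a b c, lt a b -> lt (mmul c a) (mmul c b)
    & forall a, a != mono1 -> lt mono1 a].
Definition is_module_term_order (lt : rel mterm) : Prop :=
  [/\ strict_total lt,
      forall x y c, lt x y -> lt (tmul c x) (tmul c y)
    & forall x c, c != mono1 -> lt x (tmul c x)].

Definition mpoly := mono -> K.
Definition mvec := mterm -> K.
Definition lab := (mvec * mpoly)%type.

Definition fsupp (X : eqType) (p : X -> K) : Prop :=
  exists s : seq X, forall x, p x != 0 -> x \in s.

Definition pzero : mpoly := fun _ => 0.
Definition psub (p q : mpoly) : mpoly := fun a => p a - q a.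
Definition pscale (c : K) (p : mpoly) : mpoly := fun a => c * p a.
Definition pmulm (t : mono) (p : mpoly) : mpoly :=
  fun a => if mdvd t a then p (mquo a t) else 0.
Definition mbnd (b : mono) : nat := \big[maxn/0%N]_(k < n) b k.
(* product: sum over all divisors d of b *)
Definition pmul (p q : mpoly) : mpoly := fun b =>
  \sum_(d : {ffun 'I_n -> 'I_(mbnd b).+1} | [forall k, (d k <= b k)%N])
     p [ffun k => nat_of_ord (d k)] * q (mquo b [ffun k => nat_of_ord (d k)]).

Definition vzero : mvec := fun _ => 0.
Definition vsub (u v : mvec) : mvec := fun x => u x - v x.
Definition vscale (c : K) (u : mvec) : mvec := fun x => c * u x.
Definition vmulm (t : mono) (u : mvec) : mvec :=
  fun x => if mdvd t x.1 then u (mquo x.1 t, x.2) else 0.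
Definition vcomp (u : mvec) (i : 'I_m) : mpoly := fun a => u (a, i).
Definition vembed (p : mpoly) (i : 'I_m) : mvec :=
  fun x => if x.2 == i then p x.1 else 0.
Definition unitv (i : 'I_m) : mvec :=
  vembed (fun a => if a == mono1 then 1 else 0) i.
Definition pmulv (p : mpoly) (u : mvec) : mvec := fun x => pmul p (vcomp u x.2) x.1.
Definition vdot (u : mvec) (f : 'I_m -> mpoly) : mpoly :=
  fun a => \sum_(i < m) pmul (vcomp u i) (f i) a.

(* None plays the role of lpp(0) = 0 *)
Definition is_lead (X : eqType) (lt : rel X) (p : X -> K) (o : option X) : Prop :=
  match o with
  | None => forall x, p x = 0
  | Some a => p a != 0 /\ forall x, p x != 0 -> x = a \/ lt x a
  end.
Definition lead (X : eqType) (lt : rel X) (p : X -> K) : option X :=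
  epsilon (inhabits None) (is_lead lt p).
Definition lcoef (X : eqType) (lt : rel X) (p : X -> K) : K :=
  if lead lt p is Some a then p a else 0.

Definition ole (X : eqType) (lt : rel X) (x y : option X) : bool :=
  match x, y with
  | None, _ => true
  | Some _, None => false
  | Some a, Some b => (a == b) || lt a b
  end.
Definition olt (X : eqType) (lt : rel X) (x y : option X) : bool :=
  match x, y with
  | _, None => false
  | None, Some _ => true
  | Some a, Some b => lt a b
  end.
Definition odvd (x y : option mterm) : bool :=
  match x, y with
  | Some a, Some b => tdvd a b
  | None, None => true
  | _, _ => false
  end.

Variables (ltR : rel mono) (ltM : rel mterm) (f : 'I_m -> mpoly).

Definition lppR (p : mpoly) := lead ltR p.
Definition lppM (u : mvec) := lead ltM u.
Definition lcR (p : mpoly) := lcoef ltR p.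
Definition pnz (p : mpoly) : bool := lppR p != None.

Definition inM (x : lab) : Prop := [/\ fsupp x.1, fsupp x.2 & x.2 = vdot x.1 f].

Definition lab0 : lab := (vzero, pzero).
Definition gget (G : seq lab) (i : nat) : lab := nth lab0 G i.

Definition is_SGB (G : seq lab) : Prop :=
  (forall k, (k < size G)%N -> inM (gget G k)) /\
  forall x : lab, inM x -> x.2 <> pzero ->
    exists k a b, [/\ (k < size G)%N, lppR x.2 = Some a,
      lppR (gget G k).2 = Some b, mdvd b a &
      ole ltM (lppM (vmulm (mquo a b) (gget G k).1)) (lppM x.1)].

Definition in_ideal (p : mpoly) : Prop := exists u : mvec, fsupp u /\ p = vdot u f.

Definition is_GB (Gp : seq mpoly) : Prop :=
  (forall k, (k < size Gp)%N -> in_ideal (nth pzero Gp k)) /\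
  forall p, in_ideal p -> p <> pzero ->
    exists k a b, [/\ (k < size Gp)%N, lppR p = Some a,
      lppR (nth pzero Gp k) = Some b & mdvd b a].

Definition cp_t (G : seq lab) (i j : nat) : mono :=
  match lppR (gget G i).2, lppR (gget G j).2 with
  | Some a, Some b => mquo (mlcm a b) a
  | _, _ => mono1
  end.
Definition cp_sig (G : seq lab) (i j : nat) := lppM (vmulm (cp_t G i j) (gget G i).1).
(* the critical pair of G_i and G_j: oriented so that the first signature is larger *)
Definition cpair (G : seq lab) (i j : nat) : nat * nat :=
  if ole ltM (cp_sig G j i) (cp_sig G i j) then (i, j) else (j, i).
Definition cp_regular (G : seq lab) (p : nat * nat) : bool :=
  olt ltM (cp_sig G p.2 p.1) (cp_sig G p.1 p.2).
Definition spoly (G : seq lab) (p : nat * nat) : lab :=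
  let c := lcR (gget G p.1).2 / lcR (gget G p.2).2 in
  (vsub (vmulm (cp_t G p.1 p.2) (gget G p.1).1)
        (vscale c (vmulm (cp_t G p.2 p.1) (gget G p.2).1)),
   psub (pmulm (cp_t G p.1 p.2) (gget G p.1).2)
        (pscale c (pmulm (cp_t G p.2 p.1) (gget G p.2).2))).

Definition gen_rewritable_mult (ord : nat -> nat -> Prop) (G : seq lab)
  (t : mono) (i : nat) : Prop :=
  exists2 k, (k < size G)%N &
    odvd (lppM (gget G k).1) (lppM (vmulm t (gget G i).1)) /\ ord k i.
Definition gen_rewritable (ord : nat -> nat -> Prop) (G : seq lab)
  (p : nat * nat) : Prop :=
  gen_rewritable_mult ord G (cp_t G p.1 p.2) p.1 \/
  gen_rewritable_mult ord G (cp_t G p.2 p.1) p.2.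

Definition red1 (G : seq lab) (x y : lab) : Prop :=
  exists k a b, [/\ (k < size G)%N, lppR x.2 = Some a,
    lppR (gget G k).2 = Some b, mdvd b a &
    let c := lcR x.2 / lcR (gget G k).2 in
    let t := mquo a b in
    lppM (vsub x.1 (vscale c (vmulm t (gget G k).1))) = lppM x.1 /\
    y = (vsub x.1 (vscale c (vmulm t (gget G k).1)),
         psub x.2 (pscale c (pmulm t (gget G k).2)))].
Definition reducible (G : seq lab) (x : lab) : Prop := exists y, red1 G x y.
Definition reduce_to (G : seq lab) (x y : lab) : Prop :=
  clos_refl_trans lab (red1 G) x y /\ ~ reducible G y.

Definition G_init : seq lab :=
  [seq (unitv i, f i) | i <- enum 'I_m] ++
  [seq (vsub (vembed (f p.2) p.1) (vembed (f p.1) p.2), pzero)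
     | p : 'I_m * 'I_m <- [seq (i, j) | i <- enum 'I_m, j <- enum 'I_m] & ((p.1 : nat) < p.2)%N].

Definition CP_init : seq (nat * nat) :=
  [seq cpair G_init p.1 p.2
     | p <- [seq (i, j) | i <- iota 0 m, j <- iota 0 m]
     & [&& (p.1 < p.2)%N, pnz (gget G_init p.1).2 & pnz (gget G_init p.2).2]].

Definition remove_at (s : seq (nat * nat)) (k : nat) := take k s ++ drop k.+1 s.

Definition syz_new (w : mvec) (h : mpoly) : seq lab :=
  [seq (vsub (vembed h i) (pmulv (f i) w), pzero) | i <- enum 'I_m].

Definition state := (seq lab * seq (nat * nat))%type.

(* one iteration of the while loop; arbitrary choice of the pair (index k)
   and of reducers; [ord] is the (global, index based) strict partial order
   on G, and the step includes the admissibility requirement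
   (w,h) < (u,f) for the processed regular, non gen-rewritable pair. *)
Definition gbgc_step (ord : nat -> nat -> Prop) (st st' : state) : Prop :=
  let G := st.1 in let CP := st.2 in
  exists2 k, (k < size CP)%N &
    let p := nth (0%N, 0%N) CP k in
    let CP0 := remove_at CP k in
    ((~~ cp_regular G p \/ gen_rewritable ord G p) /\ st' = (G, CP0))
    \/
    (cp_regular G p /\ ~ gen_rewritable ord G p /\
     exists w h, reduce_to G (spoly G p) (w, h) /\
       ((h = pzero /\ st' = (rcons G (w, h), CP0) /\ ord (size G) p.1)
        \/
        (h <> pzero /\
         let G' := rcons (G ++ syz_new w h) (w, h) in
         st' = (G', CP0 ++ [seq cpair G' (size G + m)%N l
                              | l <- iota 0 (size G) & pnz (gget G l).2]) /\
         ord (size G + m)%N p.1))).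

Definition strict_partial_order (ord : nat -> nat -> Prop) : Prop :=
  (forall x, ~ ord x x) /\ (forall x y z, ord x y -> ord y z -> ord x z).

End GBGC.

(* Call a critical pair of the current basis G settled when it is not regular,
   when it is gen-rewritable by G, or when G contains an element that has the
   signature of the pair and is below the pair's first component in the
   partial order (the reduced S-polynomial added when the pair was processed;
   admissibility makes it smaller).  Every step of GBGC preserves the
   invariant "each pair of elements of G with nonzero polynomial part is
   pending or settled", so on termination every pair is settled.  The
   rewriting argument then shows that such a G is an S-Groebner basis: for
   (u,f) in M with signature T take the order-minimal element of G whose
   signature divides T, cancel the signature with the corresponding multiple
   and conclude by well-founded induction on T (the module term order is well
   founded by Dickson's lemma).  The only obstruction, two minimal elements
   whose multiples share a leading power product but not a signature, is
   excluded because their critical pair is settled. *)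

From HB Require Import structures.
From mathcomp Require Import all_boot all_order all_algebra.
From mathcomp Require Import zify.
From Stdlib Require Import Relation_Operators ClassicalEpsilon Classical.
From Stdlib Require Import FunctionalExtensionality.
Set Implicit Arguments. Unset Strict Implicit. Unset Printing Implicit Defensive.
Import GRing.Theory.
Local Open Scope ring_scope.

Section PowerProducts.
Variable n : nat.
Implicit Types a b c t x : mono n.

Lemma mono_eq a b : (forall k, a k = b k) -> a = b.
Proof. by move=> h; apply/ffunP=> k; apply: h. Qed.

Lemma mdvdP a b : reflect (forall k, (a k <= b k)%N) (mdvd a b).
Proof. exact: forallP. Qed.

Lemma mmulE a b k : mmul a b k = (a k + b k)%N. Proof. by rewrite ffunE. Qed.
Lemma mquoE a b k : mquo a b k = (a k - b k)%N. Proof. by rewrite ffunE. Qed.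
Lemma mlcmE a b k : mlcm a b k = maxn (a k) (b k). Proof. by rewrite ffunE. Qed.
Lemma mono1E k : mono1 n k = 0%N. Proof. by rewrite ffunE. Qed.
End PowerProducts.

Ltac mono_solve := apply: mono_eq => k; rewrite !(mmulE, mquoE, mlcmE, mono1E); lia.
Ltac mdvd_solve := intros;
  repeat match goal with H : is_true (mdvd _ _) |- _ => move/mdvdP: H => H end;
  let k := fresh "k" in apply/mdvdP => k;
  repeat match goal with H : forall _, is_true (leq _ _) |- _ => move: (H k); clear H end;
  rewrite ?(mmulE, mquoE, mlcmE, mono1E); lia.

Section PowerProductArith.
Variable n : nat.
Implicit Types a b c t x : mono n.

Lemma mmulC a b : mmul a b = mmul b a. Proof. mono_solve. Qed.
Lemma mmulA a b c : mmul a (mmul b c) = mmul (mmul a b) c. Proof. mono_solve. Qed.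
Lemma mmul1 a : mmul (mono1 n) a = a. Proof. mono_solve. Qed.
Lemma mquo1 a : mquo a (mono1 n) = a. Proof. mono_solve. Qed.
Lemma mlcmC a b : mlcm a b = mlcm b a. Proof. mono_solve. Qed.
Lemma mquo_mmul t a : mquo (mmul t a) t = a. Proof. mono_solve. Qed.
Lemma mquo_mmulr t a : mquo (mmul t a) a = t. Proof. mono_solve. Qed.
Lemma mmul_inj t a b : mmul t a = mmul t b -> a = b.
Proof. by move=> h; rewrite -(mquo_mmul t a) h mquo_mmul. Qed.

Lemma mdvd_mmul t a : mdvd t (mmul t a). Proof. mdvd_solve. Qed.
Lemma mdvd_mmulr t a : mdvd a (mmul t a). Proof. mdvd_solve. Qed.
Lemma mdvd1 a : mdvd (mono1 n) a. Proof. mdvd_solve. Qed.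
Lemma mdvd_trans a b c : mdvd a b -> mdvd b c -> mdvd a c. Proof. mdvd_solve. Qed.
Lemma mdvd_quo a b : mdvd a b -> mdvd (mquo b a) b. Proof. mdvd_solve. Qed.

Lemma mmul_mquo t x : mdvd t x -> mmul t (mquo x t) = x.
Proof. by move/mdvdP=> h; apply: mono_eq => k; rewrite mmulE mquoE; have := h k; lia. Qed.
Lemma mmul_mquor t x : mdvd t x -> mmul (mquo x t) t = x.
Proof. by move=> h; rewrite mmulC mmul_mquo. Qed.
Lemma mquo_quo a b : mdvd a b -> mquo b (mquo b a) = a.
Proof. by move/mdvdP=> h; apply: mono_eq => k; rewrite !mquoE; have := h k; lia. Qed.
Lemma mquo_inj x a b : mdvd a x -> mdvd b x -> mquo x a = mquo x b -> a = b.
Proof. by move=> ha hb e; rewrite -(mquo_quo ha) e mquo_quo. Qed.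

Lemma lcm_split t t' b b' : mmul t b = mmul t' b' ->
  let t0 := mquo (mmul t b) (mlcm b b') in
  mmul t0 (mquo (mlcm b b') b) = t /\ mmul t0 (mquo (mlcm b b') b') = t'.
Proof.
move=> e; split; apply: mono_eq => k; have := congr1 (fun x : mono n => x k) e;
  rewrite !(mmulE, mquoE, mlcmE); lia.
Qed.

Definition divs (b : mono n) : seq (mono n) :=
  [seq [ffun k => nat_of_ord (d k)] | d : {ffun 'I_n -> 'I_(mbnd b).+1}
                                       <- enum {: {ffun 'I_n -> 'I_(mbnd b).+1}}
                                     & [forall k, (d k <= b k)%N]].

Lemma le_mbnd b k : (b k <= mbnd b)%N.
Proof. exact: (@leq_bigmax _ (fun k => b k) k). Qed.

Lemma mem_divs b d : (d \in divs b) = mdvd d b.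
Proof.
apply/mapP/idP.
  case=> e; rewrite mem_filter => /andP[/forallP h _] ->.
  by apply/mdvdP=> k; rewrite ffunE; apply: h.
move=> /mdvdP h; have hk k : (d k < (mbnd b).+1)%N.
  by rewrite ltnS; exact: leq_trans (h k) (le_mbnd b k).
exists [ffun k => inord (d k) : 'I_(mbnd b).+1].
  by rewrite mem_filter mem_enum andbT; apply/forallP=> k; rewrite ffunE inordK ?h.
by apply: mono_eq => k; rewrite !ffunE inordK.
Qed.

Lemma uniq_divs b : uniq (divs b).
Proof.
rewrite map_inj_in_uniq; first by apply: filter_uniq; apply: enum_uniq.
move=> d e _ _ h; apply/ffunP=> k; apply: val_inj.
by have := congr1 (fun x : mono n => x k) h; rewrite !ffunE.
Qed.
End PowerProductArith.

Lemma big_uniq_eq (R : nmodType) (T : eqType) (s1 s2 : seq T) (F : T -> R) :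
  uniq s1 -> uniq s2 -> s1 =i s2 -> \sum_(x <- s1) F x = \sum_(x <- s2) F x.
Proof. by move=> u1 u2 e; apply: perm_big; apply: uniq_perm. Qed.

Lemma uniq_pairs (T1 T2 : eqType) (s : seq T1) (t : T1 -> seq T2) :
  uniq s -> (forall x, x \in s -> uniq (t x)) -> uniq [seq (x, y) | x <- s, y <- t x].
Proof.
elim: s => //= x s IH /andP[xs us] ut.
rewrite cat_uniq map_inj_uniq ?ut ?mem_head //; last by move=> ? ? [].
rewrite IH ?andbT //; last by move=> z zs; apply: ut; rewrite inE zs orbT.
apply/hasPn=> p /allpairsPdep [z [y [zs _ ->]]].
by apply/mapP=> -[y' _ [ez _]]; move: xs; rewrite -ez zs.
Qed.

Lemma sum_neq0 (R : nmodType) (T : eqType) (s : seq T) (F : T -> R) :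
  \sum_(x <- s) F x != 0 -> exists2 x, x \in s & F x != 0.
Proof.
move=> nz; apply/hasP; apply: contraNT nz => /hasPn F0.
by rewrite big1_seq // => x /andP[_ /F0]; rewrite negbK => /eqP.
Qed.

Section PolynomialProduct.
Variables (K : fieldType) (n : nat).
Implicit Types p q r : mpoly K n.

Lemma pmulE p q b : pmul p q b = \sum_(d <- divs b) p d * q (mquo b d).
Proof. by rewrite /divs big_map big_filter /pmul big_enum_cond. Qed.

Lemma pmul_eq p p' q q' b : (forall x, p x = p' x) -> (forall x, q x = q' x) ->
  pmul p q b = pmul p' q' b.
Proof. by move=> h1 h2; rewrite !pmulE; apply: eq_bigr => d _; rewrite h1 h2. Qed.

Lemma pmul_subl p q r b : pmul (psub p q) r b = pmul p r b - pmul q r b.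
Proof. by rewrite !pmulE -sumrB; apply: eq_bigr => d _; rewrite /psub mulrBl. Qed.

Lemma pmul_scalel c p r b : pmul (pscale c p) r b = c * pmul p r b.
Proof. by rewrite !pmulE mulr_sumr; apply: eq_bigr => d _; rewrite /pscale mulrA. Qed.

Lemma pmul0l p q b : (forall x, p x = 0) -> pmul p q b = 0.
Proof. by move=> h; rewrite pmulE big1 // => d _; rewrite h mul0r. Qed.

Lemma pmul_sumr (I : finType) p (Q : I -> mpoly K n) b :
  pmul p (fun a => \sum_i Q i a) b = \sum_i pmul p (Q i) b.
Proof.
rewrite pmulE (eq_bigr (fun d => \sum_i p d * Q i (mquo b d))); last first.
  by move=> d _; rewrite mulr_sumr.
by rewrite exchange_big /=; apply: eq_bigr => i _; rewrite pmulE.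
Qed.

Lemma pmul1l q b : pmul (fun a => if a == mono1 n then 1 else 0) q b = q b.
Proof.
rewrite pmulE (bigD1_seq (mono1 n)) ?uniq_divs ?mem_divs ?mdvd1 //= eqxx mul1r mquo1.
by rewrite big1 ?addr0 // => d /negbTE ->; rewrite mul0r.
Qed.

Lemma pmulC p q b : pmul p q b = pmul q p b.
Proof.
rewrite !pmulE (@big_uniq_eq _ _ (divs b) (map (mquo b) (divs b))).
- rewrite big_map; apply: eq_big_seq => d; rewrite mem_divs => h.
  by rewrite mquo_quo // mulrC.
- exact: uniq_divs.
- rewrite map_inj_in_uniq ?uniq_divs // => x y; rewrite !mem_divs; exact: mquo_inj.
move=> d; rewrite mem_divs; apply/idP/mapP => [h|[e]].
  by exists (mquo b d); rewrite ?mem_divs ?mdvd_quo ?mquo_quo.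
by rewrite mem_divs => h ->; rewrite mdvd_quo.
Qed.

Lemma pmul_mulml t p q b : pmul (pmulm t p) q b = pmulm t (pmul p q) b.
Proof.
rewrite /pmulm; case: ifP => tb; last first.
  rewrite pmulE big_seq big1 // => d; rewrite mem_divs => db.
  by case: ifP => [td|]; [rewrite (mdvd_trans td db) in tb | rewrite mul0r].
rewrite !pmulE (eq_bigr (fun d => if mdvd t d then p (mquo d t) * q (mquo b d) else 0));
  last by move=> d _; case: ifP; rewrite ?mul0r.
rewrite -big_mkcond -big_filter (@big_uniq_eq _ _ _ (map (mmul t) (divs (mquo b t)))).
- rewrite big_map; apply: eq_bigr => e _; rewrite mquo_mmul; congr (_ * q _).
  by apply: mono_eq => k; rewrite !mquoE mmulE; lia.
- by rewrite filter_uniq ?uniq_divs.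
- by rewrite map_inj_uniq ?uniq_divs //; apply: mmul_inj.
move=> d; rewrite mem_filter mem_divs; apply/andP/mapP => [[td db]|[e]].
  by exists (mquo d t); rewrite ?mmul_mquo // mem_divs; mdvd_solve.
by rewrite mem_divs => eb ->; rewrite mdvd_mmul; split=> //; mdvd_solve.
Qed.

(* Associativity: both sides sum p(e) q(d) r(b/(ed)) over the factorizations
   b = e d c, enumerated by the divisor chains (d | b, e | d) and (e | b, d | b/e). *)
Lemma pmulA p q r b : pmul (pmul p q) r b = pmul p (pmul q r) b.
Proof.
pose F (pr : mono n * mono n) := p pr.2 * q (mquo pr.1 pr.2) * r (mquo b pr.1).
pose chain1 := [seq (d, e) | d <- divs b, e <- divs d].
pose chain2 := [seq (e, d) | e <- divs b, d <- divs (mquo b e)].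
have chains : chain1 =i map (fun pr => (mmul pr.1 pr.2, pr.1)) chain2.
  move=> [d e]; apply/allpairsPdep/mapP.
    move=> [d0 [e0 [hd he [-> ->]]]]; move: hd he; rewrite !mem_divs => hd he.
    exists (e0, mquo d0 e0); last by rewrite /= mmul_mquo.
    apply/allpairsPdep; exists e0, (mquo d0 e0); rewrite !mem_divs.
    by split=> //; [exact: mdvd_trans he hd | mdvd_solve].
  move=> [[e0 d0] /allpairsPdep [e1 [d1 [he hd [-> ->]]]] [-> ->]].
  move: he hd; rewrite !mem_divs => he hd.
  by exists (mmul e1 d1), e1; rewrite !mem_divs mdvd_mmul; split=> //; mdvd_solve.
transitivity (\sum_(pr <- chain1) F pr).
  by rewrite big_allpairs_dep pmulE; apply: eq_bigr => d _; rewrite pmulE mulr_suml.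
rewrite (big_uniq_eq _ _ _ chains) ?big_map; first last.
- rewrite map_inj_in_uniq; first by apply: uniq_pairs => [|d _]; exact: uniq_divs.
  by move=> [e1 d1] [e2 d2] _ _ [h1 h2] /=; subst; rewrite (mmul_inj h1).
- by apply: uniq_pairs => [|d _]; exact: uniq_divs.
rewrite big_allpairs_dep pmulE; apply: eq_bigr => e _; rewrite pmulE mulr_sumr.
apply: eq_bigr => d _; rewrite /F /= mquo_mmul -mulrA; congr (_ * (_ * r _)).
by apply: mono_eq => k; rewrite !(mquoE, mmulE); lia.
Qed.

Lemma pmul_supp p q b : pmul p q b != 0 ->
  exists d, [/\ p d != 0, q (mquo b d) != 0 & mdvd d b].
Proof.
rewrite pmulE => /sum_neq0 [d]; rewrite mem_divs => db hpq.
by exists d; split=> //; apply: contra hpq => /eqP ->; rewrite ?mul0r ?mulr0.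
Qed.
End PolynomialProduct.

(* Finitely supported coefficient functions are closed under the linear
   operations; this is what makes leading terms exist. *)
Section FiniteSupport.
Variables (K : fieldType) (X : eqType).
Implicit Types A B : X -> K.

Lemma fsupp0 A : (forall x, A x = 0) -> fsupp A.
Proof. by move=> h; exists [::] => x; rewrite h eqxx. Qed.

Lemma fsupp_sub A B : fsupp A -> fsupp B -> fsupp (fun x => A x - B x).
Proof.
move=> [s1 h1] [s2 h2]; exists (s1 ++ s2) => x hx; rewrite mem_cat.
have [ax|ax] := eqVneq (A x) 0; last by rewrite h1.
by rewrite h2 ?orbT //; apply: contra hx => /eqP bx; rewrite ax bx subr0.
Qed.

Lemma fsupp_scale c A : fsupp A -> fsupp (fun x => c * A x).
Proof.
by move=> [s h]; exists s => x hx; apply: h; apply: contra hx => /eqP ->; rewrite mulr0.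
Qed.

Lemma nonzero_coef A : A <> (fun _ => 0) -> exists x, A x != 0.
Proof.
move=> h; apply: NNPP => hn; apply: h; apply: functional_extensionality => x.
by apply/eqP; apply: contraT => hx; case: hn; exists x.
Qed.

Lemma fsupp_add A B : fsupp A -> fsupp B -> fsupp (fun x => A x + B x).
Proof.
move=> hA hB; have [s h] := fsupp_sub hA (fsupp_scale (-1) hB).
by exists s => x hx; apply: h; rewrite mulN1r opprK.
Qed.
End FiniteSupport.

Section Pairing.
Variables (K : fieldType) (n m : nat) (f : 'I_m -> mpoly K n).
Implicit Types (u v w : mvec K n m) (p q : mpoly K n).

Lemma vdot_sub u v a : vdot (vsub u v) f a = vdot u f a - vdot v f a.
Proof. by rewrite /vdot -sumrB; apply: eq_bigr => i _; exact: pmul_subl. Qed.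

Lemma vdot_scale c u a : vdot (vscale c u) f a = c * vdot u f a.
Proof. by rewrite /vdot mulr_sumr; apply: eq_bigr => i _; exact: pmul_scalel. Qed.

Lemma vdot_mulm t u a : vdot (vmulm t u) f a = pmulm t (vdot u f) a.
Proof.
rewrite /vdot (eq_bigr (fun i => pmulm t (pmul (vcomp u i) (f i)) a)).
  by rewrite /pmulm; case: ifP => // _; rewrite big1.
by move=> i _; rewrite -pmul_mulml; apply: pmul_eq.
Qed.

Lemma vdot_embed p i a : vdot (vembed p i) f a = pmul p (f i) a.
Proof.
rewrite /vdot (bigD1 i) //= big1 ?addr0.
  by apply: pmul_eq => // x; rewrite /vcomp /vembed /= eqxx.
by move=> j /negbTE ji; apply: pmul0l => x; rewrite /vcomp /vembed /= ji.
Qed.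

Lemma vdot_pmulv p w a : vdot (pmulv p w) f a = pmul p (vdot w f) a.
Proof.
rewrite pmul_sumr; apply: eq_bigr => i _.
by rewrite -pmulA; apply: pmul_eq.
Qed.

Lemma vdot_unitv i a : vdot (@unitv K n m i) f a = f i a.
Proof. by rewrite /unitv vdot_embed -(pmul1l (f i) a); apply: pmul_eq. Qed.

Lemma vdot0 u : (forall x, u x = 0) -> forall a, vdot u f a = 0.
Proof. by move=> h a; rewrite /vdot big1 // => i _; apply: pmul0l => x; exact: h. Qed.

Lemma fsupp_vmulm t u : fsupp u -> fsupp (vmulm t u).
Proof.
move=> [s h]; exists (map (tmul t) s) => x; rewrite /vmulm.
case: ifP => [td hx|_]; last by rewrite eqxx.
apply/mapP; exists (mquo x.1 t, x.2); first exact: h.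
by case: x td hx => a i /= td _; rewrite /tmul /= mmul_mquo.
Qed.

Lemma fsupp_pmulm t p : fsupp p -> fsupp (pmulm t p).
Proof.
move=> [s h]; exists (map (mmul t) s) => x; rewrite /pmulm.
case: ifP => [td hx|_]; last by rewrite eqxx.
by apply/mapP; exists (mquo x t); [exact: h | rewrite mmul_mquo].
Qed.

Lemma fsupp_vembed p i : fsupp p -> fsupp (@vembed K n m p i).
Proof.
move=> [s h]; exists (map (fun a => (a, i)) s) => x; rewrite /vembed.
case: ifP => [/eqP xi hx|_]; last by rewrite eqxx.
by apply/mapP; exists x.1; [exact: h | case: x xi hx => a j /= ->].
Qed.

Lemma fsupp_unitv i : fsupp (@unitv K n m i).
Proof.
apply: fsupp_vembed; exists [:: mono1 n] => a.
by case: ifP => [/eqP -> _|_]; rewrite ?mem_head ?eqxx.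
Qed.

Lemma fsupp_pmul p q : fsupp p -> fsupp q -> fsupp (pmul p q).
Proof.
move=> [s1 h1] [s2 h2]; exists [seq mmul d e | d <- s1, e <- s2] => b hb.
have [d [pd qd db]] := pmul_supp hb.
by rewrite -(mmul_mquo db); apply: allpairs_f; [exact: h1 | exact: h2].
Qed.

Lemma fsupp_vcomp u i : fsupp u -> fsupp (vcomp u i).
Proof. by move=> [s h]; exists (map fst s) => a ha; apply/mapP; exists (a, i) => //; exact: h. Qed.

Lemma fsupp_pmulv p w : fsupp p -> fsupp w -> fsupp (pmulv p w).
Proof.
move=> [s1 h1] [s2 h2]; exists [seq tmul d y | d <- s1, y <- s2] => x hx.
have [d [pd wd dd]] := pmul_supp hx.
have -> : x = tmul d (mquo x.1 d, x.2).
  by case: x dd {hx wd} => a i /= dd; rewrite /tmul /= mmul_mquo.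
by apply: allpairs_f; [exact: h1 | exact: h2].
Qed.

Lemma fsupp_vdot u : (forall i, fsupp (f i)) -> fsupp u -> fsupp (vdot u f).
Proof.
move=> hf hu; rewrite /vdot unlock /=.
elim: (index_enum _) => [|i r IH] /=; first exact: fsupp0.
exact: fsupp_add (fsupp_pmul (fsupp_vcomp i hu) (hf i)) IH.
Qed.
End Pairing.

Section LeadingTerms.
Variables (K : fieldType) (X : eqType) (lt : rel X).
Hypothesis hlt : strict_total lt.
Implicit Types A B : X -> K.

Lemma lt_irr x : ~~ lt x x. Proof. by case: hlt => h _ _; rewrite h. Qed.
Lemma lt_trans y x z : lt x y -> lt y z -> lt x z. Proof. by case: hlt => _ h _; apply: h. Qed.
Lemma lt_total x y : x != y -> lt x y || lt y x. Proof. by case: hlt => _ _ h; apply: h. Qed.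
Lemma lt_asym x y : lt x y -> lt y x -> False.
Proof. by move=> h1 h2; have := lt_irr x; rewrite (lt_trans h1 h2). Qed.

Lemma is_lead_uniq A o1 o2 : is_lead lt A o1 -> is_lead lt A o2 -> o1 = o2.
Proof.
case: o1 => [a|]; case: o2 => [b|] //=.
- move=> [ha h1] [hb h2]; case: (h1 b hb) => [->//|ba]; case: (h2 a ha) => [->//|ab].
  by case: (lt_asym ab ba).
- by move=> [ha _] h; rewrite h eqxx in ha.
- by move=> h [hb _]; rewrite h eqxx in hb.
Qed.

Lemma lead_eq A o : is_lead lt A o -> lead lt A = o.
Proof.
move=> h; have := epsilon_spec (inhabits None) (is_lead lt A) (ex_intro _ o h).
by move/is_lead_uniq; apply.
Qed.

(* Existence: the maximum of the (finite) support. *)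
Lemma lead_ex A : fsupp A -> exists o, is_lead lt A o.
Proof.
case=> s hs.
suff [o ho] : exists o, match o with
   | None => forall x, x \in s -> A x = 0
   | Some a => A a != 0 /\ forall x, x \in s -> A x != 0 -> x = a \/ lt x a end.
  exists o; case: o ho => [a [ha h]|h] /=; first by split=> // x hx; apply: h => //; apply: hs.
  by move=> x; apply/eqP; apply: contraT => hx; move/eqP: (h x (hs x hx)); rewrite (negbTE hx).
elim: s {hs} => [|y s [o ho]]; first by exists None.
have [ay|ay] := eqVneq (A y) 0.
  exists o; case: o ho => [a [ha h]|h]; last by move=> x; rewrite inE => /orP[/eqP->|/h].
  by split=> // x; rewrite inE => /orP[/eqP->|/h //]; rewrite ay eqxx.
case: o ho => [a [ha h]|h]; last first.
  exists (Some y); split=> // x; rewrite inE => /orP[/eqP-> _|xs]; first by left.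
  by rewrite (h x xs) eqxx.
have [->|ya] := eqVneq y a.
  by exists (Some a); split=> // x; rewrite inE => /orP[/eqP-> _|/h //]; left.
case/orP: (lt_total ya) => yl.
  by exists (Some a); split=> // x; rewrite inE => /orP[/eqP-> _|/h //]; right.
exists (Some y); split=> // x; rewrite inE => /orP[/eqP-> _|xs hx]; first by left.
by case: (h x xs hx) => [->|xa]; right=> //; exact: lt_trans xa yl.
Qed.

Lemma lead_spec A : fsupp A -> is_lead lt A (lead lt A).
Proof. by move=> /lead_ex [o ho]; rewrite (lead_eq ho). Qed.

Lemma lead_None A : fsupp A -> lead lt A = None -> forall x, A x = 0.
Proof. by move=> /lead_spec + h; rewrite h. Qed.

Lemma lead_nz A : fsupp A -> (exists x, A x != 0) -> exists a, lead lt A = Some a.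
Proof.
move=> /lead_spec; case: (lead lt A) => [a|] h; first by exists a.
by case=> x; rewrite h eqxx.
Qed.

Lemma lead_sub_low A B c a ob : is_lead lt A (Some a) -> is_lead lt B ob ->
  olt lt ob (Some a) -> is_lead lt (fun x => A x - c * B x) (Some a).
Proof.
move=> [ha hA]; case: ob => [b [hb hB] /= ba|/= hB _]; last first.
  by split=> [|x]; rewrite hB mulr0 subr0 //; exact: hA.
have Ba : B a = 0.
  apply/eqP; apply: contraT => /hB [e|ab]; last by case: (lt_asym ab ba).
  by rewrite e (negbTE (lt_irr b)) in ba.
split=> [|x hx]; first by rewrite Ba mulr0 subr0.
have [ax|/hA //] := eqVneq (A x) 0.
have bx : B x != 0 by apply: contra hx => /eqP ->; rewrite ax mulr0 subr0.
by right; case: (hB x bx) => [->//|xb]; exact: lt_trans xb ba.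
Qed.

Lemma lead_sub_high A B c a b : is_lead lt A (Some a) -> is_lead lt B (Some b) ->
  lt a b -> c != 0 -> is_lead lt (fun x => A x - c * B x) (Some b).
Proof.
move=> [ha hA] [hb hB] ab c0.
have Ab : A b = 0.
  apply/eqP; apply: contraT => /hA [e|ba]; last by case: (lt_asym ab ba).
  by rewrite e (negbTE (lt_irr a)) in ab.
split=> [|x hx]; first by rewrite Ab sub0r oppr_eq0 mulf_neq0.
have [bx|/hB //] := eqVneq (B x) 0.
have ax : A x != 0 by apply: contra hx => /eqP ->; rewrite bx mulr0 subr0.
by right; case: (hA x ax) => [->//|xa]; exact: lt_trans xa ab.
Qed.

Lemma lead_sub_cancel A B a : is_lead lt A (Some a) -> is_lead lt B (Some a) ->
  forall x, A x - (A a / B a) * B x != 0 -> lt x a.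
Proof.
move=> [ha hA] [hb hB] x hx.
have xa : x != a by apply: contraTneq hx => ->; rewrite divfK // subrr eqxx.
have [ax|/hA [e|//]] := eqVneq (A x) 0; last by rewrite e eqxx in xa.
have bx : B x != 0 by apply: contra hx => /eqP ->; rewrite ax mulr0 subr0.
by case: (hB x bx) => [e|//]; rewrite e eqxx in xa.
Qed.

Lemma olt_lead_of A a : fsupp A -> (forall x, A x != 0 -> lt x a) ->
  olt lt (lead lt A) (Some a).
Proof. by move=> /lead_spec; case: (lead lt A) => [b [hb _]|] //= h; exact: h. Qed.
End LeadingTerms.

Section Terms.
Variables (n m : nat).
Implicit Types x y z : mterm n m.

Lemma tmulE t x : tmul t x = (mmul t x.1, x.2). Proof. by []. Qed.
Lemma tmulA s t y : tmul s (tmul t y) = tmul (mmul s t) y.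
Proof. by rewrite !tmulE /= mmulA. Qed.
Lemma tmul1 y : tmul (mono1 n) y = y.
Proof. by case: y => a i; rewrite tmulE mmul1. Qed.
Lemma tdvd_tmul y z : tdvd y z -> z = tmul (mquo z.1 y.1) y.
Proof. by case: y => a i; case: z => b j /andP[/= /eqP -> h]; rewrite tmulE /= mmul_mquor. Qed.
Lemma tdvd_tmulr t y : tdvd y (tmul t y).
Proof. by rewrite /tdvd /= eqxx mdvd_mmulr. Qed.
Lemma tdvd_trans x y z : tdvd x y -> tdvd y z -> tdvd x z.
Proof.
by rewrite /tdvd => /andP[/eqP -> h1] /andP[/eqP -> h2]; rewrite eqxx (mdvd_trans h1 h2).
Qed.
End Terms.

Section TermOrders.
Variables (K : fieldType) (n m : nat) (ltR : rel (mono n)) (ltM : rel (mterm n m)).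
Hypotheses (hR : is_term_order ltR) (hM : is_module_term_order ltM).

Lemma ltM_strict : strict_total ltM. Proof. by case: hM. Qed.
Lemma ltR_strict : strict_total ltR. Proof. by case: hR. Qed.

Lemma ltM_mul c x y : ltM x y -> ltM (tmul c x) (tmul c y).
Proof. by case: hM => _ h _; apply: h. Qed.
Lemma ltR_mul c x y : ltR x y -> ltR (mmul c x) (mmul c y).
Proof. by case: hR => _ h _; apply: h. Qed.

Lemma ltM_mul_inv c x y : ltM (tmul c x) (tmul c y) -> ltM x y.
Proof.
move=> h; have [e|ne] := eqVneq x y; first by rewrite e (negbTE (lt_irr ltM_strict _)) in h.
case/orP: (lt_total ltM_strict ne) => // yx.
by case: (lt_asym ltM_strict h (ltM_mul c yx)).
Qed.

Lemma ltM_le_mul c x : x = tmul c x \/ ltM x (tmul c x).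
Proof.
have [->|ne] := eqVneq c (mono1 n); first by rewrite tmul1; left.
by right; case: hM => _ _ h; apply: h.
Qed.

Lemma lead_vmulm t (u : mvec K n m) o : is_lead ltM u o ->
  is_lead ltM (vmulm t u) (omap (tmul t) o).
Proof.
case: o => [y [hy h]|h] /=; last by move=> x; rewrite /vmulm h; case: ifP.
split; first by rewrite /vmulm /= mdvd_mmul mquo_mmul; case: y hy {h}.
move=> x; rewrite /vmulm; case: ifP => [td|_]; last by rewrite eqxx.
have ex : x = tmul t (mquo x.1 t, x.2) by case: x td => a i /= td; rewrite tmulE /= mmul_mquo.
by move=> /h [e|l]; [left; rewrite ex e | right; rewrite ex; exact: ltM_mul].
Qed.

Lemma lead_pmulm t (p : mpoly K n) o : is_lead ltR p o ->
  is_lead ltR (pmulm t p) (omap (mmul t) o).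
Proof.
case: o => [y [hy h]|h] /=; last by move=> x; rewrite /pmulm h; case: ifP.
split; first by rewrite /pmulm mdvd_mmul mquo_mmul.
move=> x; rewrite /pmulm; case: ifP => [td|_]; last by rewrite eqxx.
have ex : x = mmul t (mquo x t) by rewrite mmul_mquo.
by move=> /h [e|l]; [left; rewrite ex e | right; rewrite ex; exact: ltR_mul].
Qed.

Lemma lppM_vmulm t (u : mvec K n m) : fsupp u ->
  lppM ltM (vmulm t u) = omap (tmul t) (lppM ltM u).
Proof. by move=> /(lead_spec ltM_strict) h; apply: (lead_eq ltM_strict); apply: lead_vmulm. Qed.

Lemma lppR_pzero : lppR ltR (@pzero K n) = None.
Proof. exact: (lead_eq ltR_strict). Qed.

Lemma lppM_unitv (c : 'I_m) : lppM ltM (@unitv K n m c) = Some (mono1 n, c).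
Proof.
apply: (lead_eq ltM_strict); split; first by rewrite /unitv /vembed /= !eqxx oner_eq0.
move=> [a i]; rewrite /unitv /vembed /=; case: ifP => [/eqP ->|_]; last by rewrite eqxx.
by case: ifP => [/eqP ->|_]; [left | rewrite eqxx].
Qed.
End TermOrders.

Lemma min_above (v : nat -> nat) i :
  exists j, (i < j)%N /\ forall j', (i < j')%N -> (v j <= v j')%N.
Proof.
suff H N : (exists j, (i < j)%N /\ (v j <= N)%N) ->
    exists j, (i < j)%N /\ forall j', (i < j')%N -> (v j <= v j')%N.
  by apply: (H (v i.+1)); exists i.+1.
elim: N => [|N IH] [j [ij hj]].
  by exists j; split=> // j' _; move: hj; rewrite leqn0 => /eqP ->.
case: (classic (exists j, (i < j)%N /\ (v j <= N)%N)) => [/IH //|h].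
exists j; split=> // j' ij'; apply: leq_trans hj _; rewrite leqNgt; apply/negP => hlt.
by apply: h; exists j'.
Qed.

Lemma nondecreasing_subseq (v : nat -> nat) : exists g : nat -> nat,
  (forall i, (g i < g i.+1)%N) /\ (forall i, (v (g i) <= v (g i.+1))%N).
Proof.
pose nx i := proj1_sig (constructive_indefinite_description _ (min_above v i)).
have nxP i : (i < nx i)%N /\ forall j', (i < j')%N -> (v (nx i) <= v j')%N.
  exact: (proj2_sig (constructive_indefinite_description _ (min_above v i))).
pose g := fix g i := if i is i'.+1 then nx (g i') else nx 0.
have gS i : g i.+1 = nx (g i) by [].
exists g; split=> i; rewrite gS; first by case: (nxP (g i)).
case: i => [|i]; rewrite ?gS.
  by case: (nxP 0) => h0 h1; apply: h1; case: (nxP (nx 0)) => h2 _; exact: ltn_trans h0 h2.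
case: (nxP (g i)) => h0 h1; apply: h1; case: (nxP (nx (g i))) => h2 _; exact: ltn_trans h0 h2.
Qed.

Lemma dickson k (s : nat -> nat -> nat) :
  exists i j, (i < j)%N /\ forall c, (c < k)%N -> (s i c <= s j c)%N.
Proof.
elim: k s => [|k IH] s; first by exists 0%N, 1%N.
have [g [gi gv]] := nondecreasing_subseq (fun i => s i k).
have [i [j [ij h]]] := IH (fun i c => s (g i) c).
have gmono a b : (a < b)%N -> (g a < g b)%N /\ (s (g a) k <= s (g b) k)%N.
  elim: b => // b IHb; rewrite ltnS leq_eqVlt => /orP[/eqP ->|/IHb [h1 h2]].
    by split; [exact: gi | exact: gv].
  by split; [exact: ltn_trans h1 (gi b) | exact: leq_trans h2 (gv b)].
exists (g i), (g j); case: (gmono i j ij) => h1 h2; split=> // c.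
by rewrite ltnS leq_eqVlt => /orP[/eqP ->|/h].
Qed.

(* A module term order is well founded: a descending chain would contain, by
   Dickson's lemma applied to exponent vectors and component indicators, a
   term dividing a later (hence not smaller) one. *)
Section WellFounded.
Variables (n m : nat) (ltM : rel (mterm n m)).
Hypothesis hM : is_module_term_order ltM.

(* Coordinates 0..n-1 are the exponents, coordinate n+i indicates component i. *)
Definition term_code (x : mterm n m) (c : nat) : nat :=
  if (insub c : option 'I_n) is Some k then x.1 k else (c - n == x.2)%N.

Lemma term_code_tdvd x y : (forall c, (c < n + m)%N -> (term_code x c <= term_code y c)%N) ->
  tdvd x y.
Proof.
case: x y => [a i] [b j] /= h; apply/andP; split.
  have := h (n + i)%N; rewrite ltn_add2l ltn_ord /term_code => /(_ isT).
  case: insubP => [k' /= + _|_]; first by rewrite ltnNge leq_addr.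
  by rewrite addKn eqxx; case: eqP => // /val_inj ->.
apply/mdvdP=> k; have := h k; rewrite /term_code /=.
case: insubP => [k' _ /val_inj -> |]; last by rewrite ltn_ord.
by apply; exact: leq_trans (ltn_ord k) (leq_addr _ _).
Qed.

Lemma tdvd_not_lt x y : tdvd x y -> ~ ltM y x.
Proof.
move=> /tdvd_tmul ->; case: (ltM_le_mul hM (mquo y.1 x.1) x) => [<-|l].
  by rewrite (negbTE (lt_irr (ltM_strict hM) _)).
by move=> l'; case: (lt_asym (ltM_strict hM) l l').
Qed.

Lemma wf_ltM : well_founded (fun x y => ltM x y).
Proof.
move=> x0; apply: NNPP => nacc.
pose NA := {x | ~ Acc (fun x y => ltM x y) x}.
have step (x : NA) : {y : NA | ltM (proj1_sig y) (proj1_sig x)}.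
  case: x => x hx; apply: constructive_indefinite_description.
  apply: NNPP => hn; apply: (hx); constructor=> y hy; apply: NNPP => hy'.
  by apply: hn; exists (exist _ y hy').
pose ch := fix ch i := if i is i'.+1 then proj1_sig (step (ch i')) else exist _ x0 nacc.
have chlt i j : (i < j)%N -> ltM (proj1_sig (ch j)) (proj1_sig (ch i)).
  elim: j => // j IH; rewrite ltnS leq_eqVlt => /orP[/eqP ->|/IH h].
    exact: (proj2_sig (step (ch j))).
  exact: (lt_trans (ltM_strict hM) (proj2_sig (step (ch j))) h).
have [i [j [ij h]]] := dickson (n + m) (fun i => term_code (proj1_sig (ch i))).
exact: tdvd_not_lt (term_code_tdvd h) (chlt i j ij).
Qed.
End WellFounded.

Section ModuleM.
Variables (K : fieldType) (n m : nat) (f : 'I_m -> mpoly K n).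
Hypothesis hf : forall i, fsupp (f i).

(* x - c t z: the operation on labelled polynomials underlying reductions,
   S-polynomials and signature cancellation. *)
Definition lab_red (x z : lab K n m) (c : K) (t : mono n) : lab K n m :=
  (vsub x.1 (vscale c (vmulm t z.1)), psub x.2 (pscale c (pmulm t z.2))).

Lemma inM_red (x y : lab K n m) c t : inM f x -> inM f y -> inM f (lab_red x y c t).
Proof.
case: x y => x1 x2 [y1 y2] [/= s1 s2 e1] [/= t1 t2 e2]; split => /=.
- by apply: fsupp_sub => //; apply: fsupp_scale; apply: fsupp_vmulm.
- by apply: fsupp_sub => //; apply: fsupp_scale; apply: fsupp_pmulm.
apply: functional_extensionality => a.
by rewrite vdot_sub vdot_scale vdot_mulm /psub /pscale e1 e2.
Qed.

Lemma inM_mulm (x : lab K n m) t : inM f x -> inM f (vmulm t x.1, pmulm t x.2).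
Proof.
case: x => x1 x2 [/= s1 s2 e1]; split => /=; [exact: fsupp_vmulm | exact: fsupp_pmulm |].
by apply: functional_extensionality => a; rewrite vdot_mulm e1.
Qed.

Lemma inM_unit c : inM f (@unitv K n m c, f c).
Proof.
split => //=; first exact: fsupp_unitv.
by apply: functional_extensionality => a; rewrite vdot_unitv.
Qed.

Lemma inM_syz0 (i j : 'I_m) : inM f (vsub (vembed (f j) i) (vembed (f i) j), @pzero K n).
Proof.
split => /=; [by apply: fsupp_sub; apply: fsupp_vembed | exact: fsupp0 |].
by apply: functional_extensionality => a; rewrite vdot_sub !vdot_embed pmulC subrr.
Qed.

Lemma inM_syz (w : mvec K n m) h (i : 'I_m) : inM f (w, h) ->
  inM f (vsub (vembed h i) (pmulv (f i) w), @pzero K n).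
Proof.
case=> /= sw sh e; split => /=; last first.
- apply: functional_extensionality => a.
  by rewrite vdot_sub vdot_embed vdot_pmulv -e pmulC subrr.
- exact: fsupp0.
by apply: fsupp_sub; [apply: fsupp_vembed | apply: fsupp_pmulv].
Qed.

Lemma inM_zero (x : lab K n m) : inM f x -> (forall z, x.1 z = 0) -> forall a, x.2 a = 0.
Proof. by case: x => x1 x2 [/= _ _ ->] h a; apply: vdot0. Qed.
End ModuleM.

Lemma exists_minimal (ord : nat -> nat -> Prop) (P : nat -> Prop) N :
  strict_partial_order ord -> (exists k, (k < N)%N /\ P k) ->
  exists k, [/\ (k < N)%N, P k & forall k', (k' < N)%N -> P k' -> ~ ord k' k].
Proof.
case=> irr tr; elim: N => [[k [//]]|N IH] hex.
have [/IH [k0 [h0 p0 m0]]|hn] := classic (exists k, (k < N)%N /\ P k).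
  have [[pN oN]|hno] := classic (P N /\ ord N k0).
    exists N; split=> // k'; rewrite ltnS leq_eqVlt => /orP[/eqP -> _|hk' pk' ok'].
      exact: irr.
    by apply: (m0 k' hk' pk'); apply: tr ok' oN.
  exists k0; split=> //; first exact: ltn_trans h0 (ltnSn N).
  by move=> k'; rewrite ltnS leq_eqVlt => /orP[/eqP ->|/m0 //] pN oN; apply: hno.
have {}hex : P N.
  case: hex => k [+ pk]; rewrite ltnS leq_eqVlt => /orP[/eqP <- //|hk].
  by case: hn; exists k.
exists N; split=> // k'; rewrite ltnS leq_eqVlt => /orP[/eqP -> _|hk' pk']; first exact: irr.
by case: hn; exists k'.
Qed.

Lemma gget_cat (K : fieldType) (n m : nat) (G s : seq (lab K n m)) k :
  (k < size G)%N -> gget (G ++ s) k = gget G k.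
Proof. by move=> h; rewrite /gget nth_cat h. Qed.

Lemma gget_last (K : fieldType) (n m : nat) (G : seq (lab K n m)) x :
  gget (G ++ [:: x]) (size G) = x.
Proof. by rewrite /gget nth_cat ltnn subnn. Qed.

Lemma nth_map_ex (A B : Type) (g : A -> B) (l : seq A) (d0 : B) i :
  (i < size (map g l))%N -> exists a, nth d0 (map g l) i = g a.
Proof. by elim: l i => [|a l IH] [|i] //=; [exists a | rewrite ltnS; apply: IH]. Qed.

Section Algorithm.
Variables (K : fieldType) (n m : nat) (ltR : rel (mono n)) (ltM : rel (mterm n m))
  (f : 'I_m -> mpoly K n) (ord : nat -> nat -> Prop).
Hypotheses (hR : is_term_order ltR) (hM : is_module_term_order ltM)
  (hf : forall i, fsupp (f i)) (hord : strict_partial_order ord).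
Implicit Types (G s : seq (lab K n m)) (x : lab K n m).

Definition all_inM G := forall k, (k < size G)%N -> inM f (gget G k).

Definition settled G (p : nat * nat) : Prop :=
  ~~ cp_regular ltR ltM G p \/ gen_rewritable ltR ltM ord G p \/
  exists2 j, (j < size G)%N & ord j p.1 /\ lppM ltM (gget G j).1 = cp_sig ltR ltM G p.1 p.2.

Definition pairs_settled G := forall i k, (i < size G)%N -> (k < size G)%N -> i != k ->
  pnz ltR (gget G i).2 -> pnz ltR (gget G k).2 ->
  exists2 p, (p == cpair ltR ltM G i k) || (p == cpair ltR ltM G k i) & settled G p.

Lemma G_init_unit (c : 'I_m) : gget (G_init f) c = (@unitv K n m c, f c).
Proof.
rewrite /gget /G_init nth_cat size_map size_enum_ord ltn_ord.
by rewrite (nth_map c) ?size_enum_ord ?ltn_ord // nth_ord_enum.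
Qed.

Lemma size_G_init : (m <= size (G_init f))%N.
Proof. by rewrite /G_init size_cat size_map size_enum_ord leq_addr. Qed.

Lemma G_init_syz k : (k < size (G_init f))%N -> (m <= k)%N ->
  (gget (G_init f) k).2 = @pzero K n /\ inM f (gget (G_init f) k).
Proof.
move=> hk hm; rewrite /gget /G_init nth_cat size_map size_enum_ord ltnNge hm /=.
set s2 := [seq _ | _ <- _].
have hk' : (k - m < size s2)%N.
  by move: hk hm; rewrite /G_init size_cat size_map size_enum_ord -/s2; move: (size s2); lia.
by have [[i j] ->] := nth_map_ex (lab0 K n m) hk'; split=> //; exact: inM_syz0.
Qed.

Lemma all_inM_init : all_inM (G_init f).
Proof.
move=> k hk; case: (ltnP k m) => km; last by case: (G_init_syz hk km).
by have := G_init_unit (Ordinal km) => /= ->; apply: inM_unit.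
Qed.

Section Criterion.
Variable G : seq (lab K n m).
Hypotheses (hpre : exists s, G = G_init f ++ s) (hG : all_inM G) (hS : pairs_settled G).

Definition sig_divisor (T : mterm n m) k :=
  exists y, lppM ltM (gget G k).1 = Some y /\ tdvd y T.
Definition min_sig_divisor (T : mterm n m) k :=
  [/\ (k < size G)%N, sig_divisor T k &
      forall k', (k' < size G)%N -> sig_divisor T k' -> ~ ord k' k].

(* The unit vector e_i of the initial basis divides every term of component i. *)
Lemma min_sig_divisor_ex T : exists k, min_sig_divisor T k.
Proof.
apply: exists_minimal hord _; exists T.2.
have hT : (T.2 < size (G_init f))%N := leq_trans (ltn_ord _) size_G_init.
case: hpre => s eG; split; first by rewrite eG size_cat ltn_addr.
exists (mono1 n, T.2); rewrite eG gget_cat // G_init_unit (lppM_unitv _ hM).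
by rewrite /tdvd /= eqxx mdvd1.
Qed.

Lemma odvd_sig_divisor j u T : odvd (lppM ltM (gget G j).1) (Some u) -> tdvd u T ->
  sig_divisor T j.
Proof.
case E: (lppM ltM (gget G j).1) => [y|] //= h1 h2.
by exists y; split=> //; exact: tdvd_trans h1 h2.
Qed.

(* A regular pair of minimal signature divisors of T and T', whose multiples
   in the pair divide T and T', cannot be settled: each way of settling it
   exhibits a smaller signature divisor. *)
Lemma settled_min_divisors T T' i k u u' :
  min_sig_divisor T i -> min_sig_divisor T' k ->
  cp_sig ltR ltM G i k = Some u -> tdvd u T ->
  cp_sig ltR ltM G k i = Some u' -> tdvd u' T' ->
  cp_regular ltR ltM G (i, k) -> ~ settled G (i, k).
Proof.
move=> [hi _ mi] [hk _ mk] hu uT hu' u'T reg.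
case=> [|[[[j hj [od oj]]|[j hj [od oj]]]|[j hj [oj sj]]]]; first by rewrite reg.
- by rewrite /= -/(cp_sig ltR ltM G i k) hu in od; exact: mi j hj (odvd_sig_divisor od uT) oj.
- by rewrite /= -/(cp_sig ltR ltM G k i) hu' in od; exact: mk j hj (odvd_sig_divisor od u'T) oj.
- by apply: (mi j hj _ oj); exists u; rewrite sj.
Qed.

(* Two minimal signature divisors whose multiples t G_i and t' G_k have the
   same leading power product have the same signature: otherwise their
   critical pair would be regular and unsettled. *)
Lemma no_signature_collision T T' i k y y' b b' :
  min_sig_divisor T i -> lppM ltM (gget G i).1 = Some y -> tdvd y T ->
  lppR ltR (gget G i).2 = Some b ->
  min_sig_divisor T' k -> lppM ltM (gget G k).1 = Some y' -> tdvd y' T' ->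
  lppR ltR (gget G k).2 = Some b' ->
  mmul (mquo T.1 y.1) b = mmul (mquo T'.1 y'.1) b' -> ~ ltM T' T.
Proof.
move=> Di hy hyT hb Dk hy' hy'T hb' e lt'; have strM := ltM_strict hM.
have [hi _ _] := Di; have [hk _ _] := Dk.
have [[fsi _ _] [fsk _ _]] := (hG hi, hG hk).
have [e1 e2] := lcm_split e; set L := mlcm b b' in e1 e2; set t0 := mquo _ L in e1 e2.
have cs1 : cp_sig ltR ltM G i k = Some (tmul (mquo L b) y).
  by rewrite /cp_sig /cp_t hb hb' (lppM_vmulm hM) // hy.
have cs2 : cp_sig ltR ltM G k i = Some (tmul (mquo L b') y').
  by rewrite /cp_sig /cp_t hb' hb mlcmC (lppM_vmulm hM) // hy'.
have eT : T = tmul t0 (tmul (mquo L b) y) by rewrite tmulA e1 -(tdvd_tmul hyT).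
have eT' : T' = tmul t0 (tmul (mquo L b') y') by rewrite tmulA e2 -(tdvd_tmul hy'T).
have l12 : ltM (tmul (mquo L b') y') (tmul (mquo L b) y).
  by apply: (ltM_mul_inv hM (c := t0)); rewrite -eT -eT'.
have ik : i != k.
  apply/eqP => ik; subst k; rewrite cs1 in cs2.
  by move: l12; rewrite -(Some_inj cs2) (negbTE (lt_irr strM _)).
have cpik : cpair ltR ltM G i k = (i, k) by rewrite /cpair cs1 cs2 /= l12 orbT.
have cpki : cpair ltR ltM G k i = (i, k).
  rewrite /cpair cs1 cs2 /=; case: ifP => // /orP[/eqP ee|ll]; last by case: (lt_asym strM ll l12).
  by rewrite ee (negbTE (lt_irr strM _)) in l12.
have [pzi pzk] : pnz ltR (gget G i).2 /\ pnz ltR (gget G k).2 by rewrite /pnz hb hb'.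
have [p] := hS hi hk ik pzi pzk.
rewrite cpik cpki orbb => /eqP ->.
apply: (settled_min_divisors Di Dk cs1 _ cs2); rewrite ?eT ?eT' ?tdvd_tmulr //.
by rewrite /cp_regular /= cs1 cs2.
Qed.

(* Witness that x meets the S-Groebner condition: G_k is the minimal signature
   divisor of a term T' not above the signature of x, and the corresponding
   multiple of G_k has the leading power product of x. *)
Definition cover x (T' : mterm n m) k :=
  exists y b, [/\ min_sig_divisor T' k, lppM ltM (gget G k).1 = Some y, tdvd y T',
    lppR ltR (gget G k).2 = Some b &
    lppR ltR x.2 = Some (mmul (mquo T'.1 y.1) b) /\ ole ltM (Some T') (lppM ltM x.1)].

Lemma cover_transfer x x' T T1 T' k :
  lppM ltM x.1 = Some T -> lppM ltM x'.1 = Some T1 -> ltM T1 T ->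
  lppR ltR x'.2 = lppR ltR x.2 -> cover x' T' k -> cover x T' k.
Proof.
move=> hT hT1 lt1 e [y [b [D hy hyT hb [ha hle]]]]; exists y, b.
split=> //; split; first by rewrite -e.
move: hle; rewrite hT1 hT /= => /orP[/eqP ->|l]; apply/orP; right => //.
exact: (lt_trans (ltM_strict hM) l lt1).
Qed.

Lemma sig_below x T : inM f x -> olt ltM (lppM ltM x.1) (Some T) ->
  (exists a, x.2 a != 0) -> exists T1, lppM ltM x.1 = Some T1 /\ ltM T1 T.
Proof.
move=> hx; case E: (lppM ltM x.1) => [T1|] //= hl; first by exists T1.
have [fs1 _ _] := hx; case=> a; rewrite (inM_zero hx) ?eqxx //.
exact: (lead_None (ltM_strict hM) fs1 E).
Qed.

Lemma sig_cancel x T i y t c : inM f x -> lppM ltM x.1 = Some T -> (i < size G)%N ->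
  lppM ltM (gget G i).1 = Some y -> T = tmul t y ->
  c = x.1 T / vmulm t (gget G i).1 T ->
  [/\ inM f (lab_red x (gget G i) c t),
      olt ltM (lppM ltM (lab_red x (gget G i) c t).1) (Some T) & c != 0].
Proof.
move=> hx hT hi hy eT ec; have strM := ltM_strict hM.
have [[fsx _ _] [fsv _ _]] := (hx, hG hi).
have hvl : is_lead ltM (vmulm t (gget G i).1) (Some T).
  rewrite eT -[Some _]/(omap (tmul t) (Some y)) -hy.
  by apply: (lead_vmulm hM); apply: lead_spec.
have hxl : is_lead ltM x.1 (Some T) by rewrite -hT; apply: lead_spec.
have hx' : inM f (lab_red x (gget G i) c t) := inM_red c t hx (hG hi).
have [fsx' _ _] := hx'; split=> //.
  apply: (olt_lead_of strM fsx') => z.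
  by rewrite ec; exact: lead_sub_cancel hxl hvl z.
by rewrite ec mulf_neq0 ?invr_eq0; [| case: hxl | case: hvl].
Qed.

(* Cancelling T with the minimal
   signature divisor G_i of T either gives a cover at once, or keeps the
   leading power product (and a cover of the result serves), or raises it
   to that of the multiple of G_i, which would be a signature collision. *)
Lemma cover_ex T : forall x, inM f x -> lppM ltM x.1 = Some T -> x.2 <> @pzero K n ->
  exists T' k, cover x T' k.
Proof.
have [strM strR] := (ltM_strict hM, ltR_strict hR).
elim/(well_founded_induction (wf_ltM hM)): T => T IH x hx hT hnz.
have [i Di] := min_sig_divisor_ex T; have [hi [y [hy hyT]] _] := Di.
set t := mquo T.1 y.1; set g := (gget G i).2.
set c := x.1 T / vmulm t (gget G i).1 T; set x' := lab_red x (gget G i) c t.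
have [hx' sig' c0] := sig_cancel hx hT hi hy (tdvd_tmul hyT) erefl.
have IHx' a' : is_lead ltR x'.2 (Some a') ->
    exists T1 T' k, [/\ lppM ltM x'.1 = Some T1, ltM T1 T & cover x' T' k].
  move=> [ha' _]; have [T1 [hT1 lt1]] := sig_below hx' sig' (ex_intro _ a' ha').
  have nz' : x'.2 <> @pzero K n by move=> e; rewrite e /pzero eqxx in ha'.
  by have [T' [k cov]] := IH T1 lt1 x' hx' hT1 nz'; exists T1, T', k.
have [[_ fsx _] [_ fsg _]] := (hx, hG hi).
have [a ha] := lead_nz strR fsx (nonzero_coef hnz).
have hfl : is_lead ltR x.2 (Some a) by rewrite -ha; apply: lead_spec.
have keep : is_lead ltR x'.2 (Some a) -> exists T' k, cover x T' k.
  move=> hfl'; have [T1 [T' [k [hT1 lt1 cov]]]] := IHx' a hfl'.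
  exists T', k; apply: cover_transfer hT hT1 lt1 _ cov.
  by rewrite /lppR (lead_eq strR hfl) (lead_eq strR hfl').
case Eg: (lppR ltR g) => [b|]; last first.
  have hg0 : is_lead ltR (pmulm t g) None.
    by have := lead_pmulm hR t (lead_spec strR fsg); rewrite -/(lppR ltR g) Eg.
  exact/keep/(lead_sub_low strR c hfl hg0).
have hgl : is_lead ltR (pmulm t g) (Some (mmul t b)).
  by rewrite -[Some _]/(omap (mmul t) (Some b)) -Eg; apply: (lead_pmulm hR); apply: lead_spec.
have [eab|neab] := eqVneq a (mmul t b).
  exists T, i, y, b; split=> //; split; last by rewrite hT /= eqxx.
  by rewrite /lppR (lead_eq strR hfl) eab.
case/orP: (lt_total strR neab) => lab; last exact/keep/(lead_sub_low strR c hfl hgl).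
have hfl' : is_lead ltR x'.2 (Some (mmul t b)) := lead_sub_high strR hfl hgl lab c0.
have [T1 [T' [k [hT1 lt1 [y' [b' [Dk hy' hyT' hb' [ha' hle]]]]]]]] := IHx' _ hfl'.
exfalso; apply: (no_signature_collision Di hy hyT Eg Dk hy' hyT' hb').
  by move: ha'; rewrite /lppR (lead_eq strR hfl') => -[].
move: hle; rewrite hT1 /= => /orP[/eqP ->//|l]; exact: (lt_trans strM l lt1).
Qed.

(* A cover of (u, f) is exactly the element of G required by the definition of
   an S-Groebner basis. *)
Lemma criterion_SGB : is_SGB ltR ltM f G.
Proof.
split=> // x hx hnz; have [fs1 _ _] := hx.
case E: (lppM ltM x.1) => [T|]; last first.
  case: hnz; apply: functional_extensionality => a.
  exact: (inM_zero hx (lead_None (ltM_strict hM) fs1 E)).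
have [T' [k [y [b [[hk _ _] hy hyT hb [ha hle]]]]]] := cover_ex hx E hnz.
exists k, (mmul (mquo T'.1 y.1) b), b; split=> //; first exact: mdvd_mmulr.
have [fsk _ _] := hG hk.
by move: hle; rewrite (lppM_vmulm hM) // hy E /= mquo_mmulr -(tdvd_tmul hyT).
Qed.

Lemma criterion_GB : is_GB ltR f [seq x.2 | x <- G].
Proof.
have nthE k : (k < size G)%N -> nth (@pzero K n) [seq x.2 | x <- G] k = (gget G k).2.
  by move=> hk; rewrite (nth_map (lab0 K n m)).
split=> [k|p [u [fu ep]] hnz].
  by rewrite size_map => hk; rewrite nthE //; have [fs _ e] := hG hk; exists (gget G k).1.
have hx : inM f (u, p) by split=> //=; rewrite ep; apply: fsupp_vdot.
have [_ /(_ (u, p) hx hnz) [k [a [b [hk ha hb hab _]]]]] := criterion_SGB.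
by exists k, a, b; split; rewrite ?size_map ?nthE.
Qed.
End Criterion.

Lemma cp_t_ext G s i k : (i < size G)%N -> (k < size G)%N ->
  cp_t ltR (G ++ s) i k = cp_t ltR G i k.
Proof. by move=> hi hk; rewrite /cp_t !gget_cat. Qed.

Lemma cp_sig_ext G s i k : (i < size G)%N -> (k < size G)%N ->
  cp_sig ltR ltM (G ++ s) i k = cp_sig ltR ltM G i k.
Proof. by move=> hi hk; rewrite /cp_sig cp_t_ext // gget_cat. Qed.

Lemma cpair_ext G s i k : (i < size G)%N -> (k < size G)%N ->
  cpair ltR ltM (G ++ s) i k = cpair ltR ltM G i k.
Proof. by move=> hi hk; rewrite /cpair !cp_sig_ext. Qed.

Lemma settled_ext G s p : (p.1 < size G)%N -> (p.2 < size G)%N ->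
  settled G p -> settled (G ++ s) p.
Proof.
have hj j : (j < size G)%N -> (j < size (G ++ s))%N by rewrite size_cat; exact: ltn_addr.
case: p => i k /= hi hk [reg|[[[j hj' [od oj]]|[j hj' [od oj]]]|[j hj' [oj sj]]]].
- by left; rewrite /cp_regular /= !cp_sig_ext.
- by right; left; left; exists j; rewrite ?hj //= cp_t_ext // !gget_cat.
- by right; left; right; exists j; rewrite ?hj //= cp_t_ext // !gget_cat.
- by right; right; exists j; rewrite ?hj //= gget_cat // cp_sig_ext.
Qed.

Lemma cpair_idx G i k : cpair ltR ltM G i k = (i, k) \/ cpair ltR ltM G i k = (k, i).
Proof. by rewrite /cpair; case: ifP; [left | right]. Qed.

Lemma pnz_pzero : pnz ltR (@pzero K n) = false.
Proof. by rewrite /pnz (lppR_pzero _ hR). Qed.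

Lemma reduce_inv G x y : all_inM G -> inM f x -> clos_refl_trans _ (red1 ltR ltM G) x y ->
  inM f y /\ lppM ltM y.1 = lppM ltM x.1.
Proof.
move=> hG hx h; elim: h hx => [x0 y0 h0 | x0 | x0 y0 z0 _ IH1 _ IH2] hx0 //.
  case: h0 => [k [a [b [hk _ _ _ /= [hl ->]]]]]; split=> //.
  exact: (inM_red _ _ hx0 (hG _ hk)).
by case: (IH1 hx0) => h1 e1; case: (IH2 h1) => h2 e2; rewrite e2.
Qed.

Lemma spoly_inM G p : all_inM G -> (p.1 < size G)%N -> (p.2 < size G)%N ->
  inM f (spoly ltR G p).
Proof. by move=> hG h1 h2; exact: (inM_red _ _ (inM_mulm _ (hG _ h1)) (hG _ h2)). Qed.

Lemma spoly_sig G p : all_inM G -> (p.1 < size G)%N -> (p.2 < size G)%N ->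
  cp_regular ltR ltM G p -> lppM ltM (spoly ltR G p).1 = cp_sig ltR ltM G p.1 p.2.
Proof.
move=> hG h1 h2; have strM := ltM_strict hM.
rewrite /cp_regular; case E1: (cp_sig ltR ltM G p.1 p.2) => [a|] reg; last first.
  by case: (cp_sig ltR ltM G p.2 p.1) reg.
have [[fs1 _ _] [fs2 _ _]] := (hG _ h1, hG _ h2).
have hA : is_lead ltM (vmulm (cp_t ltR G p.1 p.2) (gget G p.1).1) (Some a).
  by rewrite -E1; apply: (lead_spec strM); apply: fsupp_vmulm.
have hB := lead_spec strM (fsupp_vmulm (cp_t ltR G p.2 p.1) fs2).
exact: (lead_eq strM (lead_sub_low strM _ hA hB reg)).
Qed.

Definition pairs_covered G (CP : seq (nat * nat)) :=
  forall i k, (i < size G)%N -> (k < size G)%N -> i != k ->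
    pnz ltR (gget G i).2 -> pnz ltR (gget G k).2 ->
    exists2 p, (p == cpair ltR ltM G i k) || (p == cpair ltR ltM G k i) &
      (p \in CP \/ settled G p).

Definition invariant (st : state K n m) : Prop :=
  [/\ exists s, st.1 = G_init f ++ s, all_inM st.1,
      forall p, p \in st.2 -> (p.1 < size st.1)%N /\ (p.2 < size st.1)%N &
      pairs_covered st.1 st.2].

Lemma invariant_init : invariant (G_init f, CP_init ltR ltM f).
Proof.
have lowm i : (i < size (G_init f))%N -> pnz ltR (gget (G_init f) i).2 -> (i < m)%N.
  move=> hi; case: (ltnP i m) => // im; case: (G_init_syz hi im) => ->.
  by rewrite pnz_pzero.
split => /=; [by exists [::]; rewrite cats0 | exact: all_inM_init | |].
  move=> p /mapP [[i j]]; rewrite mem_filter => /andP[_ /allpairsP [[i' j']]] /=.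
  case=> /[!mem_iota] /= hi hj [-> ->] ->.
  have [hi' hj'] := (leq_trans hi size_G_init, leq_trans hj size_G_init).
  by case: (cpair_idx (G_init f) i' j') => ->.
move=> i k hi hk ik pi pk; have [im km] := (lowm i hi pi, lowm k hk pk).
have mem_init a b : (a < b)%N -> (a < m)%N -> (b < m)%N ->
    pnz ltR (gget (G_init f) a).2 -> pnz ltR (gget (G_init f) b).2 ->
    cpair ltR ltM (G_init f) a b \in CP_init ltR ltM f.
  move=> lab am bm pa pb; apply/mapP; exists (a, b) => //.
  by rewrite mem_filter /= lab pa pb; apply: allpairs_f; rewrite mem_iota.
case: (ltngtP i k) => [lik|lki|eik]; last by rewrite eik eqxx in ik.
- by exists (cpair ltR ltM (G_init f) i k); [rewrite eqxx | left; apply: mem_init].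
- by exists (cpair ltR ltM (G_init f) k i); [rewrite eqxx orbT | left; apply: mem_init].
Qed.

Lemma mem_remove_at (CP : seq (nat * nat)) k q : (k < size CP)%N -> q \in CP ->
  q = nth (0%N, 0%N) CP k \/ q \in remove_at CP k.
Proof.
move=> hk; rewrite -{1}(cat_take_drop k CP) (drop_nth (0%N, 0%N) hk) mem_cat inE.
rewrite /remove_at mem_cat.
by case/orP=> [->|/orP[/eqP->|->]]; [right | left | right; rewrite orbT].
Qed.

Lemma remove_at_sub (CP : seq (nat * nat)) k q : q \in remove_at CP k -> q \in CP.
Proof. by rewrite /remove_at mem_cat => /orP[/mem_take|/mem_drop]. Qed.

Lemma invariant_discard G CP k : invariant (G, CP) -> (k < size CP)%N ->
  settled G (nth (0%N, 0%N) CP k) -> invariant (G, remove_at CP k).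
Proof.
move=> [/= hpre hG hCP hP] hk hp; split=> //= [q /remove_at_sub /hCP //|].
move=> i j hi hj ij pi pj; have [q hq qd] := hP i j hi hj ij pi pj; exists q => //.
case: qd => [qin|]; last by right.
by case: (mem_remove_at hk qin) => [->|]; [right | left].
Qed.

Lemma pairs_covered_append G CP k p s j w h : invariant (G, CP) -> (k < size CP)%N ->
  p = nth (0%N, 0%N) CP k -> (j < size (G ++ s))%N -> ord j p.1 -> gget (G ++ s) j = (w, h) ->
  lppM ltM w = cp_sig ltR ltM G p.1 p.2 ->
  forall i l, (i < size G)%N -> (l < size G)%N -> i != l ->
    pnz ltR (gget G i).2 -> pnz ltR (gget G l).2 ->
    exists2 q, (q == cpair ltR ltM (G ++ s) i l) || (q == cpair ltR ltM (G ++ s) l i) &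
      (q \in remove_at CP k \/ settled (G ++ s) q).
Proof.
move=> [/= _ _ hCP hP] hk ep hj oj gj sw i l hi hl il pi pl.
have [q hq qd] := hP i l hi hl il pi pl; exists q; first by rewrite !cpair_ext.
have [q1 q2] : (q.1 < size G)%N /\ (q.2 < size G)%N.
  by case/orP: hq => /eqP ->; [case: (cpair_idx G i l) | case: (cpair_idx G l i)] => ->.
case: qd => [qin|]; last by right; exact: settled_ext.
case: (mem_remove_at hk qin) => [eq|]; last by left.
have [p1 p2] := hCP p (ltac:(by rewrite ep mem_nth)).
by right; right; right; exists j; rewrite // eq -ep gj /= sw cp_sig_ext.
Qed.

(* A pair reduced to zero adds the syzygy (w, 0), which is in no pair. *)
Lemma invariant_add_zero G CP k w : invariant (G, CP) -> (k < size CP)%N ->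
  inM f (w, @pzero K n) -> ord (size G) (nth (0%N, 0%N) CP k).1 ->
  lppM ltM w = cp_sig ltR ltM G (nth (0%N, 0%N) CP k).1 (nth (0%N, 0%N) CP k).2 ->
  invariant (rcons G (w, @pzero K n), remove_at CP k).
Proof.
move=> hI hk hw o sw; have [/= hpre hG hCP _] := hI.
rewrite -cats1; set G' := G ++ _.
have gl : gget G' (size G) = (w, @pzero K n) by apply: gget_last.
have sz : size G' = (size G).+1 by rewrite size_cat addn1.
have old l : (l < size G')%N -> pnz ltR (gget G' l).2 -> (l < size G)%N.
  by rewrite sz ltnS leq_eqVlt => /orP[/eqP ->|//]; rewrite gl pnz_pzero.
split => /=.
- by rewrite /G'; case: hpre => s ->; exists (s ++ [:: (w, @pzero K n)]); rewrite catA.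
- move=> j; rewrite sz ltnS leq_eqVlt => /orP[/eqP ->|hj]; first by rewrite gl.
  by rewrite gget_cat //; apply: hG.
- by move=> q /remove_at_sub /hCP [a b]; rewrite sz; split; exact: ltnW.
move=> i j hi hj ij pi pj; have [hi' hj'] := (old i hi pi, old j hj pj).
rewrite !gget_cat // in pi pj.
by apply: (pairs_covered_append hI hk erefl _ o gl); rewrite ?sz.
Qed.

Lemma syz_append_layout G w h : inM f (w, h) ->
  let G' := G ++ (syz_new f w h ++ [:: (w, h)]) in
  [/\ size G' = (size G + m).+1, gget G' (size G + m) = (w, h) &
      forall l, (size G <= l)%N -> (l < size G + m)%N ->
        (gget G' l).2 = @pzero K n /\ inM f (gget G' l)].
Proof.
move=> hw; have sS : size (syz_new f w h) = m by rewrite size_map size_enum_ord.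
split=> [|| l h1 h2]; first by rewrite !size_cat sS addn1 addnS.
  by rewrite /gget nth_cat ltnNge leq_addr /= addKn nth_cat sS ltnn subnn.
rewrite /gget nth_cat ltnNge h1 /= nth_cat sS (_ : (l - size G < m)%N); last by lia.
have hl : (l - size G < size (syz_new f w h))%N by rewrite sS; lia.
by have [i ->] := nth_map_ex (lab0 K n m) hl; split=> //; apply: inM_syz.
Qed.

Lemma invariant_add_nonzero G CP k w h : invariant (G, CP) -> (k < size CP)%N ->
  inM f (w, h) -> h <> @pzero K n -> ord (size G + m)%N (nth (0%N, 0%N) CP k).1 ->
  lppM ltM w = cp_sig ltR ltM G (nth (0%N, 0%N) CP k).1 (nth (0%N, 0%N) CP k).2 ->
  let G' := rcons (G ++ syz_new f w h) (w, h) in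
  invariant (G', remove_at CP k ++ [seq cpair ltR ltM G' (size G + m) l
                                   | l <- iota 0 (size G) & pnz ltR (gget G l).2]).
Proof.
move=> hI hk hw hn0 o sw /=; have [/= hpre hG hCP _] := hI.
rewrite -cats1 -catA; have [sz gN gS] := syz_append_layout G hw.
set s := syz_new f w h ++ _ in sz gN gS *; set G' := G ++ s in sz gN gS *.
set N := (size G + m)%N in sz gN gS *.
have cls l : (l < size G')%N -> pnz ltR (gget G' l).2 -> (l < size G)%N \/ l = N.
  rewrite sz ltnS leq_eqVlt => /orP[/eqP ->|hl]; first by right.
  case: (ltnP l (size G)) => [|hg]; first by left.
  by case: (gS l hg hl) => -> _; rewrite pnz_pzero.
have newmem l : (l < size G)%N -> pnz ltR (gget G' l).2 ->
    cpair ltR ltM G' N l \in remove_at CP k ++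
      [seq cpair ltR ltM G' N l0 | l0 <- iota 0 (size G) & pnz ltR (gget G l0).2].
  move=> hl pl; rewrite /G' gget_cat // in pl; rewrite mem_cat; apply/orP; right.
  by apply: map_f; rewrite mem_filter mem_iota pl.
split => /=.
- by rewrite /G'; case: hpre => s0 ->; exists (s0 ++ s); rewrite -catA.
- move=> j; rewrite sz ltnS leq_eqVlt => /orP[/eqP ->|hj]; first by rewrite gN.
  case: (ltnP j (size G)) => [hjG|hg]; last by case: (gS j hg hj).
  by rewrite /G' gget_cat //; apply: hG.
- move=> q; rewrite mem_cat => /orP[/remove_at_sub /hCP [a b]|]; first by rewrite sz; lia.
  move=> /mapP [l]; rewrite mem_filter mem_iota /= => /andP[_ hl] ->.
  by case: (cpair_idx G' N l) => ->; rewrite sz /=; lia.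
move=> i j hi hj ij pi pj.
case: (cls i hi pi) => [hi'|ei]; case: (cls j hj pj) => [hj'|ej].
- rewrite /G' !gget_cat // in pi pj.
  have hN : (N < size G')%N by rewrite sz.
  have [q hq qd] := pairs_covered_append hI hk erefl hN o gN sw hi' hj' ij pi pj.
  by exists q => //; case: qd => [qin|]; [left; rewrite mem_cat qin | right].
- by rewrite ej; exists (cpair ltR ltM G' N i); [rewrite eqxx orbT | left; apply: newmem].
- by rewrite ei; exists (cpair ltR ltM G' N j); [rewrite eqxx | left; apply: newmem].
- by rewrite ei ej eqxx in ij.
Qed.

(* Every step of GBGC preserves the invariant; for a processed pair, the
   reduced S-polynomial lies in M and has the signature of the pair. *)
Lemma invariant_step st st' : invariant st -> gbgc_step ltR ltM f ord st st' -> invariant st'.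
Proof.
case: st => G CP hI [k hk] /=; have [/= _ hG hCP _] := hI.
set p := nth (0%N, 0%N) CP k; have [p1 p2] := hCP p (mem_nth _ hk).
case=> [[hdone ->] | [reg [nrw [w [h [[hred _] hcase]]]]]].
  by apply: invariant_discard => //; case: hdone => [r|rw]; [left | right; left].
have [hw lw] := reduce_inv hG (spoly_inM hG p1 p2) hred.
have sw : lppM ltM w = cp_sig ltR ltM G p.1 p.2 by rewrite lw spoly_sig.
case: hcase => [[h0 [-> o]] | [hn0 [-> o]]].
- by rewrite h0 in hw *; exact: (invariant_add_zero hI hk hw o sw).
- exact: (invariant_add_nonzero hI hk hw hn0 o sw).
Qed.

Lemma invariant_run st st' : clos_refl_trans _ (gbgc_step ltR ltM f ord) st st' ->
  invariant st -> invariant st'.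
Proof.
elim=> [x y hs | x | x y z _ IH1 _ IH2] hI //; first exact: invariant_step hI hs.
exact: IH2 (IH1 hI).
Qed.

Lemma pairs_covered_nil G : pairs_covered G [::] -> pairs_settled G.
Proof.
move=> hP i k hi hk ik pi pk; have [p hp [//|dp]] := hP i k hi hk ik pi pk.
by exists p.
Qed.
End Algorithm.

Theorem theorem1 (K : fieldType) (n m : nat)
  (ltR : rel (mono n)) (ltM : rel (mterm n m))
  (f : 'I_m -> mpoly K n) (ord : nat -> nat -> Prop) (Gfin : seq (lab K n m)) :
  is_term_order ltR ->
  is_module_term_order ltM ->
  (forall i, fsupp (f i)) ->
  strict_partial_order ord ->
  clos_refl_trans (state K n m) (gbgc_step ltR ltM f ord)
    (G_init f, CP_init ltR ltM f) (Gfin, [::]) ->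
  is_SGB ltR ltM f Gfin /\ is_GB ltR f [seq x.2 | x <- Gfin].
Proof.
move=> hR hM hf hord hrun.
have [/= hpre hG _ hcov] := invariant_run hR hM hf hrun (invariant_init ltM ord hR hf).
have hS := pairs_covered_nil hcov.
split; [exact: (criterion_SGB hR hM hord hpre hG hS) |
       exact: (criterion_GB hR hM hf hord hpre hG hS)].
Qed.
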